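(* Let $P_0$ be a distribution with a uniformly continuous density $p_0$ on $\mathbb{R}$, with distribution function $F_0\colon[-\infty,\infty]\to[0,1]$. For $u\in[0,1]$ define $F_0^{-1}(u) := \inf\{z\in[-\infty,\infty]:F_0(z)\ge u\}$ and $J_0(u) := (p_0\circ F_0^{-1})(u)$ (with $p_0(\pm\infty):=0$). Then both $J_0$ and its least concave majorant $\hat J_0$ on $[0,1]$ are continuous, with $p_0 = J_0\circ F_0$ on $\mathbb{R}$, and $\psi_0^* := \hat J_0^{(\mathrm{R})}\circ F_0$ is decreasing and right-continuous as a function from $\mathbb{R}$ to $[-\infty,\infty]$, provided that we set $\hat J_0^{(\mathrm{R})}(1) := \lim_{u\nearrow1}\hat J_0^{(\mathrm{R})}(u)$. Moreover, $\psi_0^*(z)\in\mathbb{R}$ if and only if $z\in\mathcal{S}_0$.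
   Context: $\hat J_0^{(\mathrm{R})}$ denotes the right derivative of $\hat J_0$. $\mathcal{S}_0 := (\inf\{z:p_0(z)>0\},\sup\{z:p_0(z)>0\})$. *)

From Stdlib Require Import Reals ClassicalEpsilon.
From Coquelicot Require Import Coquelicot.
Open Scope R_scope.

Definition is_density (p : R -> R) : Prop :=
  (forall x, 0 <= p x) /\
  is_RInt_gen p (Rbar_locally m_infty) (Rbar_locally p_infty) 1.

Definition unif_cont (p : R -> R) : Prop :=
  forall eps : R, 0 < eps -> exists delta : R, 0 < delta /\
    forall x y, Rabs (x - y) < delta -> Rabs (p x - p y) < eps.

Definition distF (p : R -> R) (z : R) : R :=
  RInt_gen p (Rbar_locally m_infty) (at_point z).

Definition distF_bar (p : R -> R) (z : Rbar) : R :=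
  match z with
  | Finite x => distF p x
  | p_infty => 1
  | m_infty => 0
  end.

Definition quantile (p : R -> R) (u : R) : Rbar :=
  Rbar_glb (fun z : Rbar => u <= distF_bar p z).

Definition p_bar (p : R -> R) (z : Rbar) : R :=
  match z with Finite x => p x | _ => 0 end.

Definition Jfun (p : R -> R) (u : R) : R := p_bar p (quantile p u).

Definition concave_on01 (g : R -> R) : Prop :=
  forall x y t, 0 <= x <= 1 -> 0 <= y <= 1 -> 0 <= t <= 1 ->
    t * g x + (1 - t) * g y <= g (t * x + (1 - t) * y).

Definition lcm01 (J : R -> R) (u : R) : R :=
  real (Glb_Rbar (fun y => exists g : R -> R,
           concave_on01 g /\ (forall v, 0 <= v <= 1 -> J v <= g v) /\ y = g u)).

Definition ext_nbhs (l : Rbar) (P : Rbar -> Prop) : Prop :=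
  match l with
  | Finite x => exists eps : posreal, forall y : Rbar,
      (exists r : R, y = Finite r /\ Rabs (r - x) < eps) -> P y
  | p_infty => exists M : R, forall y : Rbar, Rbar_lt M y -> P y
  | m_infty => exists M : R, forall y : Rbar, Rbar_lt y M -> P y
  end.

Definition ext_lim (g : R -> Rbar) (F : (R -> Prop) -> Prop) : Rbar :=
  epsilon (inhabits (Finite 0)) (fun l => filterlim g F (ext_nbhs l)).

Definition right_deriv (H : R -> R) (u : R) : Rbar :=
  ext_lim (fun h => Finite ((H (u + h) - H u) / h)) (at_right 0).

Definition right_deriv01 (H : R -> R) (u : R) : Rbar :=
  if Req_EM_T u 1 then ext_lim (right_deriv H) (at_left 1)
  else right_deriv H u.

Definition psi_star (p : R -> R) (z : R) : Rbar :=
  right_deriv01 (lcm01 (Jfun p)) (distF p z).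

Definition continuous_on01 (f : R -> R) : Prop :=
  forall u, 0 <= u <= 1 ->
    filterlim f (within (fun v => 0 <= v <= 1) (locally u)) (locally (f u)).

(** endpoints of the support interval S_0 *)
Definition supp_inf (p : R -> R) : Rbar := Glb_Rbar (fun z => 0 < p z).
Definition supp_sup (p : R -> R) : Rbar := Lub_Rbar (fun z => 0 < p z).

From Stdlib Require Import Reals Lra ClassicalEpsilon Classical.
From Coquelicot Require Import Coquelicot.
Open Scope R_scope.

(* Uniform continuity of p makes p x a uniformly continuous function of F x, so p = J o F
   with J continuous and vanishing at 0 and 1; the same holds for its least concave majorant
   Jhat, whose right derivative is finite, nonincreasing and right-continuous on (0,1). At an
   endpoint of [0,1] attained by F, J and hence Jhat are infinitely steep, which makes the
   right derivative +oo at 0 and -oo at 1. Composing with the continuous nondecreasing F gives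
   the properties of psi_star. *)

Lemma ext_nbhs_lt (l : Rbar) (c : R) : Rbar_lt l c -> ext_nbhs l (fun w => Rbar_lt w c).
Proof.
  destruct l as [x| |]; simpl; intros Hlt; try tauto.
  - exists (mkposreal (c - x) ltac:(lra)). intros y [r [-> Hr]]. simpl in *.
    apply Rabs_def2 in Hr. lra.
  - exists c. tauto.
Qed.

Lemma ext_nbhs_gt (l : Rbar) (c : R) : Rbar_lt c l -> ext_nbhs l (fun w => Rbar_lt c w).
Proof.
  destruct l as [x| |]; simpl; intros Hlt; try tauto.
  - exists (mkposreal (x - c) ltac:(lra)). intros y [r [-> Hr]]. simpl in *.
    apply Rabs_def2 in Hr. lra.
  - exists c. tauto.
Qed.

Lemma ext_nbhs_refl (l : Rbar) (P : Rbar -> Prop) : ext_nbhs l P -> P l.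
Proof.
  destruct l as [x| |]; simpl.
  - intros [eps HP]. apply HP. exists x. split; [reflexivity|].
    rewrite Rminus_diag, Rabs_R0. apply cond_pos.
  - intros [M HP]. apply HP. exact I.
  - intros [M HP]. apply HP. exact I.
Qed.

Lemma Rbar_lt_dense (l1 l2 : Rbar) : Rbar_lt l1 l2 -> exists c : R, Rbar_lt l1 c /\ Rbar_lt c l2.
Proof.
  destruct l1 as [x| |], l2 as [y| |]; simpl; intros Hlt; try tauto.
  - exists ((x + y) / 2). simpl. lra.
  - exists (x + 1). simpl. lra.
  - exists (y - 1). simpl. lra.
  - exists 0. simpl. tauto.
Qed.

Lemma ext_nbhs_lim_unique {T} (F : (T -> Prop) -> Prop) {FF : ProperFilter F}
  (g : T -> Rbar) (l1 l2 : Rbar) :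
  filterlim g F (ext_nbhs l1) -> filterlim g F (ext_nbhs l2) -> l1 = l2.
Proof.
  assert (not_lt : forall a b, filterlim g F (ext_nbhs a) -> filterlim g F (ext_nbhs b) ->
    ~ Rbar_lt a b).
  { intros a b Ha Hb Hab. destruct (Rbar_lt_dense a b Hab) as [c [Hac Hcb]].
    destruct (filter_ex _ (filter_and _ _ (Ha _ (ext_nbhs_lt a c Hac)) (Hb _ (ext_nbhs_gt b c Hcb))))
      as [y [Hlt Hgt]].
    destruct y; simpl in *; lra. }
  intros H1 H2. apply Rbar_le_antisym; apply Rbar_not_lt_le; apply not_lt; assumption.
Qed.

Lemma ext_lim_eq (F : (R -> Prop) -> Prop) {FF : ProperFilter F} (g : R -> Rbar) (l : Rbar) :
  filterlim g F (ext_nbhs l) -> ext_lim g F = l.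
Proof.
  intros Hl. unfold ext_lim.
  apply (ext_nbhs_lim_unique F g); [|exact Hl].
  apply (epsilon_spec (inhabits (Finite 0)) (fun l => filterlim g F (ext_nbhs l))).
  exists l. exact Hl.
Qed.

Lemma right_deriv01_ne1 (H : R -> R) (u : R) : u <> 1 -> right_deriv01 H u = right_deriv H u.
Proof. intros Hu. unfold right_deriv01. destruct (Req_EM_T u 1); [contradiction|reflexivity]. Qed.

Definition right_continuous01 (G : R -> Rbar) (u : R) : Prop :=
  forall P, ext_nbhs (G u) P -> exists dl, 0 < dl /\ forall v, u <= v <= 1 -> v < u + dl -> P (G v).

Lemma right_continuous01_at1 (G : R -> Rbar) : right_continuous01 G 1.
Proof.
  intros P HP. exists 1. split; [lra|]. intros v Hv _.
  replace v with 1 by lra. exact (ext_nbhs_refl _ _ HP).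
Qed.

Lemma filterlim_right_continuous01_comp (G : R -> Rbar) (F : R -> R) (z : R) :
  (forall x y, x <= y -> F x <= F y) -> (forall x, F x <= 1) ->
  filterlim F (locally z) (locally (F z)) -> right_continuous01 G (F z) ->
  filterlim (fun x => G (F x)) (at_right z) (ext_nbhs (G (F z))).
Proof.
  intros F_mono F_le1 F_cont G_rc P HP. destruct (G_rc P HP) as [dl [Hdl HG]].
  destruct (proj1 (filterlim_locally F (F z)) F_cont (mkposreal dl Hdl)) as [d Hd].
  exists d. intros x Hx Hzx. apply HG.
  - split; [apply F_mono; lra | apply F_le1].
  - generalize (Hd x Hx). change (Rabs (F x - F z) < dl -> F x < F z + dl).
    intros K. apply Rabs_def2 in K. lra.
Qed.

Definition vanishing_at0 (H : R -> R) : Prop :=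
  forall eps, 0 < eps -> exists dl, 0 < dl /\ forall v, 0 <= v < dl -> H v < eps.

Definition vanishing_at1 (H : R -> R) : Prop :=
  forall eps, 0 < eps -> exists dl, 0 < dl /\ forall v, 1 - dl < v <= 1 -> H v < eps.

Definition steep_at0 (H : R -> R) : Prop :=
  forall M, exists h, 0 < h < 1 /\ M * h < H h.

Definition steep_at1 (H : R -> R) : Prop :=
  forall M, exists u, 0 < u < 1 /\ M * (1 - u) < H u.

Lemma continuous_on01_intro (f : R -> R) :
  (forall u, 0 <= u <= 1 -> forall eps, 0 < eps -> exists dl, 0 < dl /\
     forall v, 0 <= v <= 1 -> Rabs (v - u) < dl -> Rabs (f v - f u) < eps) ->
  continuous_on01 f.
Proof.
  intros Hf u Hu P [eps HP]. destruct (Hf u Hu eps (cond_pos eps)) as [dl [Hdl K]].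
  exists (mkposreal dl Hdl). intros v Hv Hvu. apply HP, K; assumption.
Qed.

Lemma Rdiv_le_cross (a1 a2 k1 k2 : R) :
  0 < k1 -> 0 < k2 -> a2 * k1 <= a1 * k2 -> a2 / k2 <= a1 / k1.
Proof.
  intros. apply (Rmult_le_reg_r (k1 * k2)); [nra|].
  replace (a2 / k2 * (k1 * k2)) with (a2 * k1) by (field; lra).
  replace (a1 / k1 * (k1 * k2)) with (a1 * k2) by (field; lra). assumption.
Qed.

Lemma is_lub_approx (E : R -> Prop) (m t : R) : is_lub E m -> t < m -> exists y, E y /\ t < y.
Proof.
  intros [_ Hleast] Ht. apply NNPP. intros Hno.
  assert (m <= t); [|lra].
  apply Hleast. intros y Ey. apply Rnot_lt_le. intros Hy. apply Hno. exists y. split; assumption.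
Qed.

Section ConcaveOn01.

Variable H : R -> R.
Hypothesis H_concave : concave_on01 H.

Lemma concave_chord a m b : 0 <= a -> a < b -> b <= 1 -> a <= m <= b ->
  (b - m) * H a + (m - a) * H b <= (b - a) * H m.
Proof.
  intros. set (t := (b - m) / (b - a)).
  assert (Ht : 0 <= t <= 1).
  { unfold t. split; [apply Rdiv_le_0_compat; lra|].
    apply Rle_div_l; lra. }
  generalize (H_concave a b t ltac:(lra) ltac:(lra) Ht).
  replace (t * a + (1 - t) * b) with m by (unfold t; field; lra).
  intros K. apply (Rmult_le_compat_l (b - a)) in K; [|lra].
  replace ((b - a) * (t * H a + (1 - t) * H b)) with ((b - m) * H a + (m - a) * H b) in K
    by (unfold t; field; lra).
  exact K.
Qed.

Definition slope u k := (H (u + k) - H u) / k.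

Lemma slope_nonincreasing u k1 k2 : 0 <= u -> 0 < k1 <= k2 -> u + k2 <= 1 ->
  slope u k2 <= slope u k1.
Proof.
  intros. unfold slope. apply Rdiv_le_cross; try lra.
  generalize (concave_chord u (u + k1) (u + k2) ltac:(lra) ltac:(lra) ltac:(lra) ltac:(lra)).
  nra.
Qed.

Lemma slope_le_chord_left w u k : 0 <= w < u -> 0 < k -> u + k <= 1 ->
  slope u k <= (H u - H w) / (u - w).
Proof.
  intros. unfold slope. apply Rdiv_le_cross; try lra.
  generalize (concave_chord w u (u + k) ltac:(lra) ltac:(lra) ltac:(lra) ltac:(lra)).
  nra.
Qed.

Lemma concave_lipschitz_interior x y : 0 < x < 1 -> 0 <= y <= 1 ->
  Rabs (H y - H x) <= (Rabs (H x - H 0) / x + Rabs (H 1 - H x) / (1 - x)) * Rabs (y - x).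
Proof.
  intros Hx Hy. set (a := Rabs (H x - H 0) / x). set (b := Rabs (H 1 - H x) / (1 - x)).
  assert (Ha : a * x = Rabs (H x - H 0)) by (unfold a; field; lra).
  assert (Hb : b * (1 - x) = Rabs (H 1 - H x)) by (unfold b; field; lra).
  assert (a0 : 0 <= a) by (unfold a; apply Rdiv_le_0_compat; [apply Rabs_pos|lra]).
  assert (b0 : 0 <= b) by (unfold b; apply Rdiv_le_0_compat; [apply Rabs_pos|lra]).
  generalize (Rle_abs (H x - H 0)) (Rle_abs (- (H x - H 0))) (Rle_abs (H 1 - H x))
    (Rle_abs (- (H 1 - H x))).
  rewrite !Rabs_Ropp. intros R1 R2 R3 R4.
  destruct (Rle_or_lt x y) as [Hxy|Hxy].
  - rewrite (Rabs_right (y - x)) by lra.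
    destruct (Req_dec x y) as [<-|Hne]; [rewrite Rminus_diag, Rabs_R0; lra|].
    generalize (concave_chord x y 1 ltac:(lra) ltac:(lra) ltac:(lra) ltac:(lra))
      (concave_chord 0 x y ltac:(lra) ltac:(lra) ltac:(lra) ltac:(lra)).
    intros C1 C2.
    assert (L1 : (1 - x) * (H y - H x) >= - (y - x) * (b * (1 - x))) by nra.
    assert (L2 : x * (H y - H x) <= (y - x) * (a * x)) by nra.
    assert (L1' : H y - H x >= - (y - x) * b) by nra.
    assert (L2' : H y - H x <= (y - x) * a) by nra.
    apply Rabs_le. split; nra.
  - rewrite (Rabs_left (y - x)) by lra.
    generalize (concave_chord y x 1 ltac:(lra) ltac:(lra) ltac:(lra) ltac:(lra))
      (concave_chord 0 y x ltac:(lra) ltac:(lra) ltac:(lra) ltac:(lra)).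
    intros C1 C2.
    assert (L1 : (1 - x) * (H y - H x) <= (x - y) * (b * (1 - x))) by nra.
    assert (L2 : x * (H y - H x) >= - (x - y) * (a * x)) by nra.
    assert (L1' : H y - H x <= (x - y) * b) by nra.
    assert (L2' : H y - H x >= - (x - y) * a) by nra.
    apply Rabs_le. split; nra.
Qed.

Definition right_slopes u (y : R) : Prop := exists k, 0 < k <= 1 - u /\ y = slope u k.

Lemma right_deriv_concave u : 0 < u < 1 ->
  exists d, right_deriv H u = Finite d /\ is_lub (right_slopes u) d.
Proof.
  intros Hu.
  assert (Hbound : bound (right_slopes u)).
  { exists ((H u - H 0) / (u - 0)). intros y [k [Hk ->]]. apply slope_le_chord_left; lra. }
  assert (Hne : exists y, right_slopes u y).
  { exists (slope u (1 - u)), (1 - u). split; [lra|reflexivity]. }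
  destruct (completeness _ Hbound Hne) as [d Hd]. exists d. split; [|exact Hd].
  apply (ext_lim_eq (at_right 0)). intros P [eps HP].
  destruct (is_lub_approx _ d (d - eps) Hd) as [y [[k0 [Hk0 ->]] Hy]];
    [destruct eps; simpl; lra|].
  exists (mkposreal k0 (proj1 Hk0)). intros h Hh Hh0.
  change (Rabs (h - 0) < k0) in Hh. rewrite Rminus_0_r, Rabs_right in Hh by lra.
  apply HP. exists (slope u h). split; [reflexivity|].
  assert (slope u k0 <= slope u h) by (apply slope_nonincreasing; lra).
  assert (slope u h <= d) by (apply (proj1 Hd); exists h; split; [lra|reflexivity]).
  apply Rabs_def1; lra.
Qed.

Lemma slope_le_right_deriv u k d : 0 < u < 1 -> right_deriv H u = Finite d ->
  0 < k <= 1 - u -> slope u k <= d.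
Proof.
  intros Hu Hd Hk. destruct (right_deriv_concave u Hu) as [d' [Hd' Hlub]].
  rewrite Hd' in Hd. injection Hd as ->.
  apply (proj1 Hlub). exists k. split; [lra|reflexivity].
Qed.

Lemma right_deriv_le_chord u w d : 0 < u < 1 -> right_deriv H u = Finite d ->
  0 <= w < u -> d <= (H u - H w) / (u - w).
Proof.
  intros Hu Hd Hw. destruct (right_deriv_concave u Hu) as [d' [Hd' Hlub]].
  rewrite Hd' in Hd. injection Hd as ->.
  apply (proj2 Hlub). intros y [k [Hk ->]]. apply slope_le_chord_left; lra.
Qed.

Lemma right_deriv_approx u d t : 0 < u < 1 -> right_deriv H u = Finite d -> t < d ->
  exists k, 0 < k <= 1 - u /\ t < slope u k.
Proof.
  intros Hu Hd Ht. destruct (right_deriv_concave u Hu) as [d' [Hd' Hlub]].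
  rewrite Hd' in Hd. injection Hd as ->.
  destruct (is_lub_approx _ _ t Hlub Ht) as [y [[k [Hk ->]] Hy]]. exists k. split; assumption.
Qed.

Lemma right_deriv_concave_nonincreasing u1 u2 d1 d2 : 0 < u1 <= u2 -> u2 < 1 ->
  right_deriv H u1 = Finite d1 -> right_deriv H u2 = Finite d2 -> d2 <= d1.
Proof.
  intros Hu1 Hu2 Hd1 Hd2. destruct (Req_dec u1 u2) as [<-|Hne].
  { rewrite Hd1 in Hd2. injection Hd2 as ->. lra. }
  generalize (slope_le_right_deriv u1 (u2 - u1) d1 ltac:(lra) Hd1 ltac:(lra))
    (right_deriv_le_chord u2 u1 d2 ltac:(lra) Hd2 ltac:(lra)).
  unfold slope. replace (u1 + (u2 - u1)) with u2 by ring. lra.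
Qed.

(* Between u and v = u + e the right derivative at v is squeezed between d and the slope of
   the chord from v to u + k, which is close to [slope u k] when e is small compared to k. *)
Lemma right_deriv_concave_right_cont u d eps : 0 < u < 1 -> right_deriv H u = Finite d -> 0 < eps ->
  exists dl, 0 < dl /\ forall v, u <= v < u + dl ->
    v < 1 /\ exists dv, right_deriv H v = Finite dv /\ Rabs (dv - d) < eps.
Proof.
  intros Hu Hd He. destruct (right_deriv_approx u d (d - eps / 2) Hu Hd ltac:(lra)) as [k [Hk Hs]].
  set (C := Rabs (H u - H 0) / u + Rabs (H 1 - H u) / (1 - u)).
  assert (C0 : 0 <= C).
  { unfold C. apply Rplus_le_le_0_compat; apply Rdiv_le_0_compat; try apply Rabs_pos; lra. }
  set (s := slope u k). set (D := C + Rabs s + eps).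
  assert (D0 : 0 < D) by (unfold D; generalize (Rabs_pos s); lra).
  exists (Rmin (k / 2) (eps / 2 * k / D)). split.
  { apply Rmin_pos; [lra|]. apply Rdiv_lt_0_compat; [nra|lra]. }
  intros v Hv. generalize (Rmin_l (k / 2) (eps / 2 * k / D)) (Rmin_r (k / 2) (eps / 2 * k / D)).
  intros M1 M2. split; [lra|].
  destruct (Req_dec v u) as [->|Hne].
  { exists d. split; [exact Hd|]. rewrite Rminus_diag, Rabs_R0. lra. }
  destruct (right_deriv_concave v ltac:(lra)) as [dv [Hdv _]]. exists dv. split; [exact Hdv|].
  set (e := v - u).
  assert (HeD : e * D <= eps / 2 * k).
  { apply Rlt_le. apply Rlt_div_r; [lra|]. unfold e. lra. }
  assert (Hupper : dv <= d).
  { generalize (right_deriv_le_chord v u dv ltac:(lra) Hdv ltac:(lra))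
      (slope_le_right_deriv u (v - u) d Hu Hd ltac:(lra)).
    unfold slope. replace (u + (v - u)) with v by ring. lra. }
  assert (Hlower : s - eps / 2 <= dv).
  { generalize (slope_le_right_deriv v (u + k - v) dv ltac:(lra) Hdv ltac:(lra)). unfold slope.
    replace (v + (u + k - v)) with (u + k) by ring. intros Q. eapply Rle_trans; [|exact Q].
    generalize (concave_lipschitz_interior u v Hu ltac:(lra)). fold C.
    rewrite (Rabs_right (v - u)) by lra. intros L. apply Rabs_le_between in L. fold e in L.
    assert (Hsk : H (u + k) - H u = s * k) by (unfold s, slope; field; lra).
    apply Rle_div_r; [lra|].
    replace (u + k - v) with (k - e) by (unfold e; ring).
    assert (e * (C - s + eps / 2) <= e * D).
    { apply Rmult_le_compat_l; [unfold e; lra|]. unfold D. generalize (Rle_abs (- s)).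
      rewrite Rabs_Ropp. lra. }
    nra. }
  unfold s in *. apply Rabs_def1; lra.
Qed.

Lemma right_deriv01_right_continuous u : 0 < u < 1 -> right_continuous01 (right_deriv01 H) u.
Proof.
  intros Hu P HP. destruct (right_deriv_concave u Hu) as [d [Hd _]].
  rewrite right_deriv01_ne1, Hd in HP by lra. destruct HP as [eps HP].
  destruct (right_deriv_concave_right_cont u d eps Hu Hd (cond_pos eps)) as [dl [Hdl K]].
  exists dl. split; [exact Hdl|]. intros v Hv Hvdl.
  destruct (K v ltac:(lra)) as [Hv1 [dv [Hdv Hclose]]].
  rewrite right_deriv01_ne1, Hdv by lra. apply HP. exists dv. split; [reflexivity|exact Hclose].
Qed.

Lemma right_deriv_concave_at0 : H 0 = 0 -> steep_at0 H -> right_deriv H 0 = p_infty.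
Proof.
  intros H0 Hsteep. apply (ext_lim_eq (at_right 0)). intros P [M HP].
  destruct (Hsteep M) as [h0 [Hh0 Hgt]].
  exists (mkposreal h0 (proj1 Hh0)). intros h Hh Hpos.
  change (Rabs (h - 0) < h0) in Hh. rewrite Rminus_0_r, Rabs_right in Hh by lra.
  apply HP. simpl.
  generalize (slope_nonincreasing 0 h h0 ltac:(lra) ltac:(lra) ltac:(lra)). unfold slope.
  rewrite !Rplus_0_l, H0, !Rminus_0_r. intros Hs. eapply Rlt_le_trans; [|exact Hs].
  apply Rlt_div_r; lra.
Qed.

Lemma right_deriv01_right_continuous_at0 : H 0 = 0 -> vanishing_at0 H -> steep_at0 H ->
  right_continuous01 (right_deriv01 H) 0.
Proof.
  intros H0 Hvan Hsteep P HP.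
  rewrite right_deriv01_ne1, (right_deriv_concave_at0 H0 Hsteep) in HP by lra.
  destruct HP as [M HP].
  destruct (Hsteep (Rabs M + 1)) as [h0 [Hh0 Hgt]].
  destruct (Hvan (H h0 - (Rabs M + 1) * h0)) as [dl [Hdl Hsmall]]; [lra|].
  exists (Rmin (h0 / 2) dl). split; [apply Rmin_pos; lra|]. intros v Hv Hvdl.
  generalize (Rmin_l (h0 / 2) dl) (Rmin_r (h0 / 2) dl). intros M1 M2.
  rewrite right_deriv01_ne1 by lra.
  destruct (Req_dec v 0) as [->|Hv0].
  { rewrite (right_deriv_concave_at0 H0 Hsteep). apply HP. exact I. }
  destruct (right_deriv_concave v ltac:(lra)) as [dv [Hdv _]]. rewrite Hdv. apply HP. simpl.
  generalize (slope_le_right_deriv v (h0 - v) dv ltac:(lra) Hdv ltac:(lra)) (Hsmall v ltac:(lra)).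
  unfold slope. replace (v + (h0 - v)) with h0 by ring. intros Hs Hv_small.
  assert (Rabs M + 1 < (H h0 - H v) / (h0 - v)).
  { apply Rlt_div_r; [lra|]. generalize (Rabs_pos M). nra. }
  generalize (Rle_abs M). lra.
Qed.

Lemma right_deriv01_concave_at1 : H 1 = 0 -> vanishing_at1 H -> steep_at1 H ->
  right_deriv01 H 1 = m_infty.
Proof.
  intros H1 Hvan Hsteep. unfold right_deriv01. destruct (Req_EM_T 1 1) as [_|C]; [|congruence].
  apply (ext_lim_eq (at_left 1)). intros P [M HP].
  destruct (Hsteep (Rabs M + 2)) as [u0 [Hu0 Hgt]].
  destruct (Hvan (1 - u0)) as [dl [Hdl Hsmall]]; [lra|].
  exists (mkposreal (Rmin (1 - u0) dl) ltac:(apply Rmin_pos; lra)). intros v Hv Hv1.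
  change (Rabs (v - 1) < Rmin (1 - u0) dl) in Hv.
  generalize (Rmin_l (1 - u0) dl) (Rmin_r (1 - u0) dl). intros M1 M2.
  rewrite Rabs_left in Hv by lra.
  destruct (right_deriv_concave v ltac:(lra)) as [d [Hd _]]. rewrite Hd. apply HP. simpl.
  generalize (right_deriv_le_chord v u0 d ltac:(lra) Hd ltac:(lra)) (Hsmall v ltac:(lra)).
  intros Hchord Hv_small.
  assert ((H v - H u0) / (v - u0) < M); [|lra].
  apply Rlt_div_l; [lra|]. generalize (Rle_abs (- M)) (Rabs_pos M). rewrite Rabs_Ropp. nra.
Qed.

Lemma concave_continuous_on01 : (forall u, 0 <= u <= 1 -> 0 <= H u) -> H 0 = 0 -> H 1 = 0 ->
  vanishing_at0 H -> vanishing_at1 H -> continuous_on01 H.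
Proof.
  intros Hnn H0 H1 Hvan0 Hvan1. apply continuous_on01_intro. intros u Hu eps He.
  destruct (Req_dec u 0) as [->|Hu0].
  { destruct (Hvan0 eps He) as [dl [Hdl Hsmall]]. exists dl. split; [exact Hdl|].
    intros v Hv Hvd. apply Rabs_def2 in Hvd.
    rewrite H0, Rminus_0_r, Rabs_right by (apply Rle_ge, Hnn, Hv). apply Hsmall. lra. }
  destruct (Req_dec u 1) as [->|Hu1].
  { destruct (Hvan1 eps He) as [dl [Hdl Hsmall]]. exists dl. split; [exact Hdl|].
    intros v Hv Hvd. apply Rabs_def2 in Hvd.
    rewrite H1, Rminus_0_r, Rabs_right by (apply Rle_ge, Hnn, Hv). apply Hsmall. lra. }
  set (C := Rabs (H u - H 0) / u + Rabs (H 1 - H u) / (1 - u)).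
  assert (C0 : 0 <= C).
  { unfold C. apply Rplus_le_le_0_compat; apply Rdiv_le_0_compat; try apply Rabs_pos; lra. }
  exists (eps / (C + 1)). split; [apply Rdiv_lt_0_compat; lra|]. intros v Hv Hvd.
  apply Rlt_div_r in Hvd; [|lra].
  eapply Rle_lt_trans; [apply (concave_lipschitz_interior u v); lra|]. fold C.
  generalize (Rabs_pos (v - u)). nra.
Qed.

End ConcaveOn01.

Definition majorant_values (J : R -> R) (u y : R) : Prop :=
  exists g : R -> R, concave_on01 g /\ (forall v, 0 <= v <= 1 -> J v <= g v) /\ y = g u.

Lemma concave_on01_affine a b : concave_on01 (fun v => a + b * v).
Proof. intros x y t _ _ _. apply Req_le. ring. Qed.

Section LeastConcaveMajorant.

Variable J : R -> R.
Variable B : R.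
Hypothesis J_nonneg : forall u, 0 <= J u.
Hypothesis J_bounded : forall u, J u <= B.

Lemma lcm01_is_glb u : 0 <= u <= 1 -> is_glb_Rbar (majorant_values J u) (lcm01 J u).
Proof.
  intros Hu. change (lcm01 J u) with (real (Glb_Rbar (majorant_values J u))).
  generalize (Glb_Rbar_correct (majorant_values J u)).
  destruct (Glb_Rbar (majorant_values J u)) as [m| |]; intros [Hlb Hglb].
  - split; assumption.
  - exfalso. apply (Hlb B). exists (fun _ => B).
    split; [intros x y t _ _ _; lra|]. split; [intros v _; apply J_bounded | reflexivity].
  - exfalso. apply (Hglb (J u)). intros y [g [_ [HJg ->]]]. apply HJg, Hu.
Qed.

Lemma lcm01_ge u : 0 <= u <= 1 -> J u <= lcm01 J u.
Proof.
  intros Hu. destruct (lcm01_is_glb u Hu) as [_ Hglb].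
  apply (Hglb (J u)). intros y [g [_ [HJg ->]]]. apply HJg, Hu.
Qed.

Lemma lcm01_le_majorant g u : 0 <= u <= 1 -> concave_on01 g ->
  (forall v, 0 <= v <= 1 -> J v <= g v) -> lcm01 J u <= g u.
Proof.
  intros Hu Hg HJg. destruct (lcm01_is_glb u Hu) as [Hlb _].
  apply (Hlb (g u)). exists g. split; [exact Hg|]. split; [exact HJg | reflexivity].
Qed.

Lemma lcm01_concave : concave_on01 (lcm01 J).
Proof.
  intros x y t Hx Hy Ht. assert (Hw : 0 <= t * x + (1 - t) * y <= 1) by nra.
  destruct (lcm01_is_glb _ Hw) as [_ Hglb].
  apply (Hglb (t * lcm01 J x + (1 - t) * lcm01 J y)). intros z [g [Hg [HJg ->]]]. simpl.
  generalize (Hg x y t Hx Hy Ht) (lcm01_le_majorant g x Hx Hg HJg)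
    (lcm01_le_majorant g y Hy Hg HJg).
  nra.
Qed.

Lemma lcm01_nonneg u : 0 <= u <= 1 -> 0 <= lcm01 J u.
Proof. intros Hu. generalize (lcm01_ge u Hu) (J_nonneg u). lra. Qed.

(* J is dominated by the affine majorant eps/2 + K v, with K so steep that K v exceeds B
   outside the neighbourhood of 0 on which J < eps/2. *)
Lemma lcm01_vanishing_at0 : vanishing_at0 J -> vanishing_at0 (lcm01 J).
Proof.
  intros Hvan eps He. destruct (Hvan (eps / 2)) as [eta [Heta Hsmall]]; [lra|].
  assert (B0 : 0 <= B) by (generalize (J_nonneg 0) (J_bounded 0); lra).
  set (K := (B + 1) / eta). assert (K0 : 0 < K) by (apply Rdiv_lt_0_compat; lra).
  assert (HK : K * eta = B + 1) by (unfold K; field; lra).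
  exists (Rmin 1 (eps / (2 * K))). split; [apply Rmin_pos; [lra | apply Rdiv_lt_0_compat; lra]|].
  intros v [Hv0 Hv]. generalize (Rmin_l 1 (eps / (2 * K))) (Rmin_r 1 (eps / (2 * K))). intros M1 M2.
  apply Rle_lt_trans with (eps / 2 + K * v).
  - apply (lcm01_le_majorant (fun w => eps / 2 + K * w)); [lra | apply concave_on01_affine |].
    intros w Hw.
    destruct (Rlt_or_le w eta) as [Hw_eta|Hw_eta].
    + generalize (Hsmall w ltac:(lra)). nra.
    + generalize (J_bounded w). nra.
  - assert (Hv' : v < eps / (2 * K)) by lra. apply Rlt_div_r in Hv'; lra.
Qed.

Lemma lcm01_at0 : vanishing_at0 J -> lcm01 J 0 = 0.
Proof.
  intros Hvan. apply Rle_antisym; [|apply lcm01_nonneg; lra].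
  apply Rnot_lt_le. intros Hpos. destruct (lcm01_vanishing_at0 Hvan _ Hpos) as [dl [Hdl Hsmall]].
  generalize (Hsmall 0 ltac:(lra)). lra.
Qed.

End LeastConcaveMajorant.

Lemma concave_on01_reflect g : concave_on01 g -> concave_on01 (fun v => g (1 - v)).
Proof.
  intros Hg x y t Hx Hy Ht.
  replace (1 - (t * x + (1 - t) * y)) with (t * (1 - x) + (1 - t) * (1 - y)) by ring.
  apply Hg; lra.
Qed.

Lemma lcm01_reflect J u : lcm01 (fun v => J (1 - v)) u = lcm01 J (1 - u).
Proof.
  unfold lcm01. f_equal. apply Glb_Rbar_eqset. intros y. split.
  - intros [g [Hg [HJg ->]]]. exists (fun v => g (1 - v)).
    split; [apply concave_on01_reflect, Hg|]. split.
    + intros v Hv. replace v with (1 - (1 - v)) at 1 by ring. apply HJg. lra.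
    + f_equal. ring.
  - intros [g [Hg [HJg ->]]]. exists (fun v => g (1 - v)).
    split; [apply concave_on01_reflect, Hg|]. split; [|reflexivity].
    intros v Hv. apply HJg. lra.
Qed.

Lemma lcm01_vanishing_at1 J B : (forall u, 0 <= J u) -> (forall u, J u <= B) ->
  vanishing_at1 J -> vanishing_at1 (lcm01 J).
Proof.
  intros Hnn Hb Hvan eps He.
  assert (Hvan0 : vanishing_at0 (lcm01 (fun v => J (1 - v)))).
  { apply (lcm01_vanishing_at0 _ B); [intros; apply Hnn | intros; apply Hb |].
    intros e He'. destruct (Hvan e He') as [dl [Hdl Hs]].
    exists dl. split; [exact Hdl|]. intros v Hv. apply Hs. lra. }
  destruct (Hvan0 eps He) as [dl [Hdl Hsmall]]. exists dl. split; [exact Hdl|].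
  intros v Hv. replace v with (1 - (1 - v)) by ring. rewrite <- lcm01_reflect. apply Hsmall. lra.
Qed.

Lemma lcm01_at1 J B : (forall u, 0 <= J u) -> (forall u, J u <= B) ->
  vanishing_at1 J -> lcm01 J 1 = 0.
Proof.
  intros Hnn Hb Hvan. apply Rle_antisym; [|apply (lcm01_nonneg _ B); auto; lra].
  apply Rnot_lt_le. intros Hpos.
  destruct (lcm01_vanishing_at1 J B Hnn Hb Hvan _ Hpos) as [dl [Hdl Hsmall]].
  generalize (Hsmall 1 ltac:(lra)). lra.
Qed.

Lemma Rbar_glb_correct (E : Rbar -> Prop) : Rbar_is_glb E (Rbar_glb E).
Proof. exact (proj2_sig (Rbar_ex_glb E)). Qed.

Section Density.

Variable p : R -> R.
Hypothesis p_nonneg : forall x, 0 <= p x.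
Hypothesis p_total : is_RInt_gen p (Rbar_locally m_infty) (Rbar_locally p_infty) 1.
Hypothesis p_unif_cont : unif_cont p.

Local Notation F := (distF p).

Lemma density_continuous x : continuous p x.
Proof.
  intros P [eps HP]. destruct (p_unif_cont eps (cond_pos eps)) as [d [Hd Hclose]].
  exists (mkposreal d Hd). intros y Hy. apply HP, Hclose, Hy.
Qed.

Lemma ex_RInt_density a b : ex_RInt p a b.
Proof. apply (ex_RInt_continuous (V := R_CompleteNormedModule)). intros; apply density_continuous. Qed.

Lemma RInt_density_Chasles a b c : RInt p a b + RInt p b c = RInt p a c.
Proof. apply (RInt_Chasles p a b c); apply ex_RInt_density. Qed.

Lemma RInt_density_nonneg a b : a <= b -> 0 <= RInt p a b.
Proof. intros Hab. apply RInt_ge_0; [exact Hab | apply ex_RInt_density | intros; apply p_nonneg]. Qed.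

Lemma RInt_density_ge a b c : a <= b -> (forall x, a < x < b -> c <= p x) ->
  c * (b - a) <= RInt p a b.
Proof.
  intros Hab Hc. replace (c * (b - a)) with (RInt (fun _ => c) a b)
    by (rewrite RInt_const; unfold scal; simpl; unfold mult; simpl; ring).
  apply RInt_le; [exact Hab | apply ex_RInt_const | apply ex_RInt_density |].
  exact Hc.
Qed.

Lemma RInt_density_le a b c : a <= b -> (forall x, a < x < b -> p x <= c) ->
  RInt p a b <= c * (b - a).
Proof.
  intros Hab Hc. replace (c * (b - a)) with (RInt (fun _ => c) a b)
    by (rewrite RInt_const; unfold scal; simpl; unfold mult; simpl; ring).
  apply RInt_le; [exact Hab | apply ex_RInt_density | apply ex_RInt_const |].
  exact Hc.
Qed.

Lemma RInt_density_total eps : 0 < eps ->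
  exists A B, forall a b, a < A -> B < b -> Rabs (RInt p a b - 1) < eps.
Proof.
  intros He. destruct (p_total (ball 1 (mkposreal eps He)) (locally_ball 1 _))
    as [Q S [A HA] [B HB] Hball].
  exists A, B. intros a b Ha Hb. destruct (Hball a b (HA a Ha) (HB b Hb)) as [y [Hy Hy1]].
  simpl in Hy. rewrite (is_RInt_unique _ _ _ _ Hy). exact Hy1.
Qed.

Lemma distF_limit z : filterlim (fun a => RInt p a z) (Rbar_locally m_infty) (locally (F z)).
Proof.
  assert (Hcauchy : exists L, filterlim (fun a => RInt p a z) (Rbar_locally m_infty) (locally L)).
  { apply (filterlim_locally_cauchy (F := Rbar_locally m_infty)). intros eps.
    destruct (RInt_density_total (eps / 2)) as [A [B Htot]]; [destruct eps; simpl; lra|].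
    exists (fun a => a < A). split; [exists A; auto|]. intros a1 a2 Ha1 Ha2.
    set (b := Rmax B z + 1). assert (HB : B < b) by (unfold b; generalize (Rmax_l B z); lra).
    generalize (Htot a1 b Ha1 HB) (Htot a2 b Ha2 HB).
    rewrite <- (RInt_density_Chasles a1 z b), <- (RInt_density_Chasles a2 z b). intros H1 H2.
    change (Rabs (RInt p a2 z - RInt p a1 z) < eps).
    apply Rabs_def2 in H1. apply Rabs_def2 in H2. apply Rabs_def1; lra. }
  destruct Hcauchy as [L HL]. replace (F z) with L; [exact HL|]. symmetry.
  apply (is_RInt_gen_unique (Fa := Rbar_locally m_infty) (Fb := at_point (T := R_UniformSpace) z)).
  intros P [eps HP]. destruct (proj1 (filterlim_locally _ _) HL eps) as [A HA].
  apply Filter_prod with (Q := fun a => a < A) (R := fun b => b = z); [exists A; auto | reflexivity|].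
  intros a b Ha ->. exists (RInt p a z). split; [apply RInt_correct, ex_RInt_density|].
  apply HP, HA, Ha.
Qed.

Lemma distF_Chasles a b : F b - F a = RInt p a b.
Proof.
  assert (Hlim : filterlim (fun c => RInt p c a + RInt p a b) (Rbar_locally m_infty)
                   (locally (F a + RInt p a b))).
  { apply (filterlim_comp_2 (F := Rbar_locally m_infty) _ (fun _ => RInt p a b) Rplus
      (distF_limit a) (filterlim_const _)).
    exact (filterlim_plus (V := R_NormedModule) (F a) (RInt p a b)). }
  apply (filterlim_ext _ (fun c => RInt p c b)) in Hlim;
    [|intros c; apply RInt_density_Chasles].
  rewrite (filterlim_locally_unique _ _ _ (distF_limit b) Hlim). ring.
Qed.

Lemma distF_nondecreasing a b : a <= b -> F a <= F b.
Proof. intros Hab. generalize (distF_Chasles a b) (RInt_density_nonneg a b Hab). lra. Qed.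

Lemma distF_vanishes_at_minfty eps : 0 < eps -> exists A, forall a, a < A -> Rabs (F a) < eps.
Proof.
  intros He. destruct (proj1 (filterlim_locally _ _) (distF_limit 0) (mkposreal eps He)) as [A HA].
  exists A. intros a Ha. generalize (HA a Ha). change (Rabs (RInt p a 0 - F 0) < eps -> Rabs (F a) < eps).
  rewrite <- distF_Chasles. replace (F 0 - F a - F 0) with (- F a) by ring. rewrite Rabs_Ropp. auto.
Qed.

Lemma distF_tends_to1 eps : 0 < eps -> exists B, forall b, B < b -> Rabs (F b - 1) < eps.
Proof.
  intros He. destruct (RInt_density_total (eps / 2)) as [A [B Htot]]; [lra|].
  destruct (distF_vanishes_at_minfty (eps / 2)) as [A' HA']; [lra|].
  exists B. intros b Hb. set (a := Rmin A A' - 1).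
  generalize (Htot a b ltac:(unfold a; generalize (Rmin_l A A'); lra) Hb)
    (HA' a ltac:(unfold a; generalize (Rmin_r A A'); lra)).
  rewrite <- distF_Chasles. intros H1 H2. apply Rabs_def2 in H1. apply Rabs_def2 in H2.
  apply Rabs_def1; lra.
Qed.

Lemma distF_nonneg z : 0 <= F z.
Proof.
  apply Rnot_lt_le. intros Hneg. destruct (distF_vanishes_at_minfty (- F z)) as [A HA]; [lra|].
  set (a := Rmin A z - 1).
  generalize (HA a ltac:(unfold a; generalize (Rmin_l A z); lra))
    (distF_nondecreasing a z ltac:(unfold a; generalize (Rmin_r A z); lra)).
  intros Ha Hmono. apply Rabs_def2 in Ha. lra.
Qed.

Lemma distF_le1 z : F z <= 1.
Proof.
  apply Rnot_lt_le. intros Hgt. destruct (distF_tends_to1 (F z - 1)) as [B HB]; [lra|].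
  set (b := Rmax B z + 1).
  generalize (HB b ltac:(unfold b; generalize (Rmax_l B z); lra))
    (distF_nondecreasing z b ltac:(unfold b; generalize (Rmax_r B z); lra)).
  intros Hb Hmono. apply Rabs_def2 in Hb. lra.
Qed.

Lemma distF_continuous x : continuous F x.
Proof.
  apply (continuous_ext (fun z => plus (F z - F 0) (F 0)) F x).
  { intros z. unfold plus; simpl. ring. }
  apply (continuous_plus (V := R_NormedModule)); [|apply continuous_const].
  apply (continuous_RInt_1 p 0 x). apply filter_forall. intros z.
  rewrite distF_Chasles. apply (RInt_correct (V := R_CompleteNormedModule)), ex_RInt_density.
Qed.

Lemma distF_surjective u : 0 < u < 1 -> exists x, F x = u.
Proof.
  intros Hu. destruct (distF_vanishes_at_minfty u) as [A HA]; [lra|].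
  destruct (distF_tends_to1 (1 - u)) as [B HB]; [lra|].
  assert (Hc : continuity F).
  { intros x. apply continuity_pt_filterlim, distF_continuous. }
  generalize (HA (A - 1) ltac:(lra)) (HB (B + 1) ltac:(lra)). intros HA1 HB1.
  apply Rabs_def2 in HA1. apply Rabs_def2 in HB1.
  destruct (IVT_gen F (A - 1) (B + 1) u Hc) as [x [_ Hx]]; [|exists x; exact Hx].
  generalize (Rmin_l (F (A - 1)) (F (B + 1))) (Rmax_r (F (A - 1)) (F (B + 1))). lra.
Qed.

Lemma density_mass_near e d x : (forall x y, Rabs (x - y) < d -> Rabs (p x - p y) < e) -> 0 < d ->
  d / 2 * (p x - e) <= F (x + d / 2) - F x /\ d / 2 * (p x - e) <= F x - F (x - d / 2).
Proof.
  intros Hclose Hd. rewrite !distF_Chasles. split.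
  - replace (d / 2) with (x + d / 2 - x) at 1 by ring. rewrite Rmult_comm.
    apply RInt_density_ge; [lra|]. intros t Ht.
    generalize (Hclose t x ltac:(rewrite Rabs_right; lra)). intros K. apply Rabs_def2 in K. lra.
  - replace (d / 2) with (x - (x - d / 2)) at 1 by ring. rewrite Rmult_comm.
    apply RInt_density_ge; [lra|]. intros t Ht.
    generalize (Hclose t x ltac:(rewrite Rabs_left1; lra)). intros K. apply Rabs_def2 in K. lra.
Qed.

Lemma density_bounded : exists B, 0 < B /\ forall x, p x <= B.
Proof.
  destruct (p_unif_cont 1 Rlt_0_1) as [d [Hd Hclose]]. exists (1 + 2 / d).
  assert (0 < 2 / d) by (apply Rdiv_lt_0_compat; lra). split; [lra|]. intros x.
  destruct (density_mass_near 1 d x Hclose Hd) as [Hmass _].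
  generalize (distF_le1 (x + d / 2)) (distF_nonneg x). intros.
  assert (p x - 1 <= 2 / d); [|lra].
  apply Rle_div_r; [lra|]. nra.
Qed.

(* A large gap between p x and p y forces mass at least of order (d/2) eps between them. *)
Lemma density_close_of_distF_close eps : 0 < eps -> exists eta, 0 < eta /\
  forall x y, Rabs (F x - F y) < eta -> Rabs (p x - p y) < eps.
Proof.
  intros He. destruct (p_unif_cont (eps / 2)) as [d [Hd Hclose]]; [lra|].
  exists (d / 2 * (eps / 2)). split; [apply Rmult_lt_0_compat; lra|].
  assert (Hle : forall x y, x <= y -> F y - F x < d / 2 * (eps / 2) -> Rabs (p x - p y) < eps).
  { intros x y Hxy HF. apply Rnot_le_lt. intros Hfar.
    destruct (Rlt_or_le (y - x) d) as [Hnear|Hfar_xy].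
    { generalize (Hclose x y ltac:(rewrite Rabs_left1; lra)). lra. }
    assert (Hbig : eps <= p x \/ eps <= p y).
    { generalize (p_nonneg x) (p_nonneg y). intros.
      destruct (Rle_or_lt eps (p x)); [now left|]. destruct (Rle_or_lt eps (p y)); [now right|].
      assert (Rabs (p x - p y) < eps) by (apply Rabs_def1; lra). lra. }
    destruct (density_mass_near (eps / 2) d x Hclose Hd) as [Kx _].
    destruct (density_mass_near (eps / 2) d y Hclose Hd) as [_ Ky].
    generalize (distF_nondecreasing (x + d / 2) y ltac:(lra))
      (distF_nondecreasing x (y - d / 2) ltac:(lra)). intros M1 M2.
    destruct Hbig as [Hbig|Hbig].
    - assert (d / 2 * (eps / 2) <= d / 2 * (p x - eps / 2)) by (apply Rmult_le_compat_l; lra). lra.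
    - assert (d / 2 * (eps / 2) <= d / 2 * (p y - eps / 2)) by (apply Rmult_le_compat_l; lra). lra. }
  intros x y HF. apply Rabs_def2 in HF.
  destruct (Rle_or_lt x y) as [Hxy|Hxy]; [apply Hle; lra|].
  rewrite Rabs_minus_sym. apply Hle; lra.
Qed.

Lemma density_small_in_tails eps : 0 < eps -> exists eta, 0 < eta /\
  forall x, F x < eta \/ 1 - eta < F x -> p x < eps.
Proof.
  intros He. destruct (p_unif_cont (eps / 2)) as [d [Hd Hclose]]; [lra|].
  exists (d / 2 * (eps / 2)). split; [apply Rmult_lt_0_compat; lra|].
  intros x Hx. apply Rnot_le_lt. intros Hbig.
  destruct (density_mass_near (eps / 2) d x Hclose Hd) as [K1 K2].
  assert (d / 2 * (eps / 2) <= d / 2 * (p x - eps / 2)) by (apply Rmult_le_compat_l; lra).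
  generalize (distF_nonneg (x - d / 2)) (distF_le1 (x + d / 2)). lra.
Qed.

Lemma density_zero_of_distF_extreme x : F x = 0 \/ F x = 1 -> p x = 0.
Proof.
  intros Hx. apply Rle_antisym; [|apply p_nonneg]. apply Rnot_lt_le. intros Hpos.
  destruct (density_small_in_tails (p x) Hpos) as [eta [Heta Hsmall]].
  assert (p x < p x) by (apply Hsmall; lra). lra.
Qed.

Lemma distF_zero_of_density_zero_below z : (forall v, v < z -> p v = 0) -> F z = 0.
Proof.
  intros Hzero.
  assert (Hflat : forall v, v < z -> F z = F v).
  { intros v Hv. generalize (distF_Chasles v z) (RInt_density_nonneg v z ltac:(lra))
      (RInt_density_le v z 0 ltac:(lra) ltac:(intros t Ht; rewrite Hzero; lra)). lra. }
  apply Rle_antisym; [|apply distF_nonneg]. apply Rnot_lt_le. intros Hpos.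
  destruct (distF_vanishes_at_minfty (F z) Hpos) as [A HA]. set (v := Rmin A z - 1).
  generalize (HA v ltac:(unfold v; generalize (Rmin_l A z); lra)).
  rewrite <- (Hflat v) by (unfold v; generalize (Rmin_r A z); lra).
  rewrite Rabs_right by lra. lra.
Qed.

Lemma distF_one_of_density_zero_above z : (forall v, z < v -> p v = 0) -> F z = 1.
Proof.
  intros Hzero.
  assert (Hflat : forall v, z < v -> F z = F v).
  { intros v Hv. generalize (distF_Chasles z v) (RInt_density_nonneg z v ltac:(lra))
      (RInt_density_le z v 0 ltac:(lra) ltac:(intros t Ht; rewrite Hzero; lra)). lra. }
  apply Rle_antisym; [apply distF_le1|]. apply Rnot_lt_le. intros Hlt.
  destruct (distF_tends_to1 (1 - F z)) as [B HB]; [lra|]. set (v := Rmax B z + 1).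
  generalize (HB v ltac:(unfold v; generalize (Rmax_l B z); lra)).
  rewrite <- (Hflat v) by (unfold v; generalize (Rmax_r B z); lra).
  rewrite Rabs_left by lra. lra.
Qed.

Lemma distF_eq0_iff z : F z = 0 <-> Rbar_le z (supp_inf p).
Proof.
  unfold supp_inf. destruct (Glb_Rbar_correct (fun z => 0 < p z)) as [Hlb Hglb]. split.
  - intros Hz. apply Hglb. intros x Hx. simpl. apply Rnot_lt_le. intros Hxz.
    assert (p x = 0); [|lra].
    apply density_zero_of_distF_extreme. left.
    generalize (distF_nondecreasing x z ltac:(lra)) (distF_nonneg x). lra.
  - intros Hz. apply distF_zero_of_density_zero_below. intros v Hv.
    destruct (Req_dec (p v) 0) as [E|E]; [exact E|]. exfalso.
    generalize (Rbar_le_trans _ _ _ Hz (Hlb v ltac:(generalize (p_nonneg v); lra))). simpl. lra.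
Qed.

Lemma distF_eq1_iff z : F z = 1 <-> Rbar_le (supp_sup p) z.
Proof.
  unfold supp_sup. destruct (Lub_Rbar_correct (fun z => 0 < p z)) as [Hub Hlub]. split.
  - intros Hz. apply Hlub. intros x Hx. simpl. apply Rnot_lt_le. intros Hzx.
    assert (p x = 0); [|lra].
    apply density_zero_of_distF_extreme. right.
    generalize (distF_nondecreasing z x ltac:(lra)) (distF_le1 x). lra.
  - intros Hz. apply distF_one_of_density_zero_above. intros v Hv.
    destruct (Req_dec (p v) 0) as [E|E]; [exact E|]. exfalso.
    generalize (Rbar_le_trans _ _ _ (Hub v ltac:(generalize (p_nonneg v); lra)) Hz). simpl. lra.
Qed.

Lemma quantile_at0 : quantile p 0 = m_infty.
Proof.
  unfold quantile. destruct (Rbar_glb_correct (fun z => 0 <= distF_bar p z)) as [Hlb _].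
  assert (K : Rbar_le (Rbar_glb (fun z => 0 <= distF_bar p z)) m_infty) by (apply Hlb; simpl; lra).
  destruct (Rbar_glb _); simpl in K; tauto.
Qed.

Lemma quantile_distF z : 0 < F z -> exists r, quantile p (F z) = Finite r /\ F r = F z.
Proof.
  intros Hz. unfold quantile. set (u := F z) in *. set (E := fun w => u <= distF_bar p w).
  destruct (Rbar_glb_correct E) as [Hlb Hglb].
  assert (Hlower : forall c, F c < u -> Rbar_is_lower_bound E (Finite c)).
  { intros c Hc [w| |] Ew; unfold E in Ew; simpl in *; [|exact I|lra].
    apply Rnot_lt_le. intros Hw. generalize (distF_nondecreasing w c ltac:(lra)). lra. }
  destruct (distF_vanishes_at_minfty u Hz) as [A HA].
  assert (K1 : Rbar_le (A - 1) (Rbar_glb E)).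
  { apply Hglb, Hlower. generalize (HA (A - 1) ltac:(lra)). intros K. apply Rabs_def2 in K. lra. }
  assert (K2 : Rbar_le (Rbar_glb E) z) by (apply Hlb; unfold E, u; simpl; lra).
  destruct (Rbar_glb E) as [r| |]; simpl in K1, K2; try tauto.
  exists r. split; [reflexivity|].
  assert (u <= F r); [|generalize (distF_nondecreasing r z K2); unfold u in *; lra].
  apply Rnot_lt_le. intros Hr.
  destruct (proj1 (filterlim_locally _ _) (distF_continuous r) (mkposreal (u - F r) ltac:(lra)))
    as [d Hd].
  assert (Hball : ball r d (r + d / 2)).
  { change (Rabs (r + d / 2 - r) < d). destruct d as [d Hd0]. simpl.
    rewrite Rabs_right; lra. }
  assert (Hright : F (r + d / 2) < u).
  { generalize (Hd _ Hball). change (Rabs (F (r + d / 2) - F r) < u - F r -> F (r + d / 2) < u).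
    intros K. apply Rabs_def2 in K. lra. }
  generalize (Hglb _ (Hlower _ Hright)). destruct d as [d Hd0]. simpl. lra.
Qed.

Lemma density_eq_of_distF_eq x y : F x = F y -> p x = p y.
Proof.
  intros Hxy. destruct (Req_dec (p x) (p y)) as [E|Hne]; [exact E|]. exfalso.
  assert (Hpos : 0 < Rabs (p x - p y)) by (apply Rabs_pos_lt; lra).
  destruct (density_close_of_distF_close _ Hpos) as [eta [Heta Hclose]].
  assert (Rabs (p x - p y) < Rabs (p x - p y)); [|lra].
  apply Hclose. rewrite Hxy, Rminus_diag, Rabs_R0. exact Heta.
Qed.

Lemma density_eq_Jfun_distF z : p z = Jfun p (F z).
Proof.
  unfold Jfun. destruct (Req_dec (F z) 0) as [Hz|Hz].
  { rewrite Hz, quantile_at0. apply density_zero_of_distF_extreme. left; exact Hz. }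
  destruct (quantile_distF z) as [r [Hq Hr]]; [generalize (distF_nonneg z); lra|].
  rewrite Hq. simpl. apply density_eq_of_distF_eq. symmetry; exact Hr.
Qed.

Lemma Jfun_at0 : Jfun p 0 = 0.
Proof. unfold Jfun. rewrite quantile_at0. reflexivity. Qed.

Lemma Jfun_at1 : Jfun p 1 = 0.
Proof.
  destruct (classic (exists x, F x = 1)) as [[x Hx]|Hnone].
  { rewrite <- Hx, <- density_eq_Jfun_distF. apply density_zero_of_distF_extreme. right; exact Hx. }
  unfold Jfun, quantile. set (E := fun w => 1 <= distF_bar p w).
  destruct (Rbar_glb_correct E) as [_ Hglb].
  assert (K : Rbar_le p_infty (Rbar_glb E)).
  { apply Hglb. intros [w| |] Ew; unfold E in Ew; simpl in *; [|exact I|lra].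
    apply Hnone. exists w. generalize (distF_le1 w). lra. }
  destruct (Rbar_glb E); simpl in K; tauto.
Qed.

Lemma Jfun_cases u : 0 <= u <= 1 ->
  ((u = 0 \/ u = 1) /\ Jfun p u = 0) \/ exists x, F x = u /\ Jfun p u = p x.
Proof.
  intros Hu. destruct (Req_dec u 0) as [->|Hu0]; [left; split; [now left | apply Jfun_at0]|].
  destruct (Req_dec u 1) as [->|Hu1]; [left; split; [now right | apply Jfun_at1]|].
  right. destruct (distF_surjective u ltac:(lra)) as [x Hx]. exists x. split; [exact Hx|].
  rewrite <- Hx. symmetry. apply density_eq_Jfun_distF.
Qed.

Lemma Jfun_nonneg u : 0 <= Jfun p u.
Proof. unfold Jfun. destruct (quantile p u); simpl; [apply p_nonneg | lra | lra]. Qed.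

Lemma Jfun_bounded : exists B, forall u, Jfun p u <= B.
Proof.
  destruct density_bounded as [B [HB0 HB]]. exists B. intros u.
  unfold Jfun. destruct (quantile p u); simpl; [apply HB | lra | lra].
Qed.

Lemma Jfun_continuous : continuous_on01 (Jfun p).
Proof.
  apply continuous_on01_intro. intros u Hu eps He.
  destruct (density_close_of_distF_close eps He) as [e1 [He1 Hclose]].
  destruct (density_small_in_tails eps He) as [e2 [He2 Htail]].
  exists (Rmin e1 e2). split; [apply Rmin_pos; lra|]. intros v Hv Hvu.
  generalize (Rmin_l e1 e2) (Rmin_r e1 e2). intros M1 M2. apply Rabs_def2 in Hvu.
  destruct (Jfun_cases u Hu) as [[Eu Ju]|[x [Fx Ju]]];
    destruct (Jfun_cases v Hv) as [[Ev Jv]|[y [Fy Jv]]]; rewrite Ju, Jv.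
  - rewrite Rminus_diag, Rabs_R0. exact He.
  - rewrite Rminus_0_r, Rabs_right by apply Rle_ge, p_nonneg. apply Htail. lra.
  - rewrite Rminus_0_l, Rabs_Ropp, Rabs_right by apply Rle_ge, p_nonneg. apply Htail. lra.
  - apply Hclose. rewrite Fx, Fy. apply Rabs_def1; lra.
Qed.

Lemma Jfun_vanishing_at0 : vanishing_at0 (Jfun p).
Proof.
  intros eps He. destruct (density_small_in_tails eps He) as [eta [Heta Htail]].
  exists (Rmin eta 1). split; [apply Rmin_pos; lra|]. intros v Hv.
  generalize (Rmin_l eta 1) (Rmin_r eta 1). intros M1 M2.
  destruct (Jfun_cases v ltac:(lra)) as [[_ Jv]|[x [Fx Jv]]]; rewrite Jv; [lra|].
  apply Htail. lra.
Qed.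

Lemma Jfun_vanishing_at1 : vanishing_at1 (Jfun p).
Proof.
  intros eps He. destruct (density_small_in_tails eps He) as [eta [Heta Htail]].
  exists (Rmin eta 1). split; [apply Rmin_pos; lra|]. intros v Hv.
  generalize (Rmin_l eta 1) (Rmin_r eta 1). intros M1 M2.
  destruct (Jfun_cases v ltac:(lra)) as [[_ Jv]|[x [Fx Jv]]]; rewrite Jv; [lra|].
  apply Htail. lra.
Qed.

Lemma distF_flat a b c : a <= b -> c * (b - a) < 1 ->
  (forall t, a < t < b -> p t <= c * (F b - F a)) -> F b = F a.
Proof.
  intros Hab Hc Hp.
  generalize (distF_Chasles a b) (RInt_density_le a b _ Hab Hp) (distF_nondecreasing a b Hab).
  nra.
Qed.

(* If J h <= M h for all h, then p = J o F <= M F to the right of the left end a0 of the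
   support, and distF_flat on [a0, a0 + 1/(M+1)] contradicts F > 0 there. *)
Lemma Jfun_steep_at0 : (exists z, F z = 0) -> steep_at0 (Jfun p).
Proof.
  intros [z Hz] M. apply NNPP. intros Hnot.
  assert (Hle : forall h, 0 < h < 1 -> Jfun p h <= M * h).
  { intros h Hh. apply Rnot_lt_le. intros Hlt. apply Hnot. exists h. split; assumption. }
  assert (M0 : 0 <= M) by (generalize (Hle (1 / 2) ltac:(lra)) (Jfun_nonneg (1 / 2)); lra).
  assert (HJ : forall h, 0 <= h <= 1 -> Jfun p h <= M * h).
  { intros h Hh. destruct (Req_dec h 0) as [->|H0]; [rewrite Jfun_at0; lra|].
    destruct (Req_dec h 1) as [->|H1]; [rewrite Jfun_at1; lra|]. apply Hle. lra. }
  apply distF_eq0_iff in Hz. destruct (supp_inf p) as [a0| |] eqn:Ha0; simpl in Hz; [| |tauto].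
  2:{ destruct (distF_tends_to1 (1 / 2)) as [B HB]; [lra|].
      generalize (HB (B + 1) ltac:(lra)).
      rewrite (proj2 (distF_eq0_iff (B + 1))) by (rewrite Ha0; exact I).
      intros K. apply Rabs_def2 in K. lra. }
  assert (Fa0 : F a0 = 0) by (apply distF_eq0_iff; rewrite Ha0; simpl; lra).
  assert (Hw : 0 < 1 / (M + 1)) by (apply Rdiv_lt_0_compat; lra).
  set (x := a0 + 1 / (M + 1)).
  assert (Fx : F x = F a0).
  { apply (distF_flat a0 x M); [unfold x; lra| |].
    - unfold x. replace (M * (a0 + 1 / (M + 1) - a0)) with (M / (M + 1)) by (field; lra).
      apply Rlt_div_l; lra.
    - intros t Ht. rewrite Fa0, Rminus_0_r, density_eq_Jfun_distF.
      eapply Rle_trans; [apply HJ; split; [apply distF_nonneg | apply distF_le1]|].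
      apply Rmult_le_compat_l; [lra | apply distF_nondecreasing; lra]. }
  rewrite Fa0 in Fx. apply distF_eq0_iff in Fx. rewrite Ha0 in Fx. simpl in Fx. unfold x in Fx. lra.
Qed.

Lemma Jfun_steep_at1 : (exists z, F z = 1) -> steep_at1 (Jfun p).
Proof.
  intros [z Hz] M. apply NNPP. intros Hnot.
  assert (Hle : forall h, 0 < h < 1 -> Jfun p h <= M * (1 - h)).
  { intros h Hh. apply Rnot_lt_le. intros Hlt. apply Hnot. exists h. split; assumption. }
  assert (M0 : 0 <= M) by (generalize (Hle (1 / 2) ltac:(lra)) (Jfun_nonneg (1 / 2)); lra).
  assert (HJ : forall h, 0 <= h <= 1 -> Jfun p h <= M * (1 - h)).
  { intros h Hh. destruct (Req_dec h 0) as [->|H0]; [rewrite Jfun_at0; lra|].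
    destruct (Req_dec h 1) as [->|H1]; [rewrite Jfun_at1; lra|]. apply Hle. lra. }
  apply distF_eq1_iff in Hz. destruct (supp_sup p) as [b0| |] eqn:Hb0; simpl in Hz; [|tauto|].
  2:{ destruct (distF_vanishes_at_minfty (1 / 2)) as [A HA]; [lra|].
      generalize (HA (A - 1) ltac:(lra)).
      rewrite (proj2 (distF_eq1_iff (A - 1))) by (rewrite Hb0; exact I).
      intros K. apply Rabs_def2 in K. lra. }
  assert (Fb0 : F b0 = 1) by (apply distF_eq1_iff; rewrite Hb0; simpl; lra).
  assert (Hw : 0 < 1 / (M + 1)) by (apply Rdiv_lt_0_compat; lra).
  set (x := b0 - 1 / (M + 1)).
  assert (Fx : F b0 = F x).
  { apply (distF_flat x b0 M); [unfold x; lra| |].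
    - unfold x. replace (M * (b0 - (b0 - 1 / (M + 1)))) with (M / (M + 1)) by (field; lra).
      apply Rlt_div_l; lra.
    - intros t Ht. rewrite Fb0, density_eq_Jfun_distF.
      eapply Rle_trans; [apply HJ; split; [apply distF_nonneg | apply distF_le1]|].
      apply Rmult_le_compat_l; [lra|]. generalize (distF_nondecreasing x t ltac:(lra)). lra. }
  rewrite Fb0 in Fx. symmetry in Fx. apply distF_eq1_iff in Fx. rewrite Hb0 in Fx. simpl in Fx.
  unfold x in Fx. lra.
Qed.

Local Notation Jhat := (lcm01 (Jfun p)).

Lemma Jhat_concave : concave_on01 Jhat.
Proof. destruct Jfun_bounded as [B HB]. exact (lcm01_concave _ B HB). Qed.

Lemma Jhat_ge_Jfun u : 0 <= u <= 1 -> Jfun p u <= Jhat u.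
Proof. destruct Jfun_bounded as [B HB]. exact (lcm01_ge _ B HB u). Qed.

Lemma Jhat_at0 : Jhat 0 = 0.
Proof.
  destruct Jfun_bounded as [B HB].
  exact (lcm01_at0 _ B Jfun_nonneg HB Jfun_vanishing_at0).
Qed.

Lemma Jhat_at1 : Jhat 1 = 0.
Proof.
  destruct Jfun_bounded as [B HB].
  exact (lcm01_at1 _ B Jfun_nonneg HB Jfun_vanishing_at1).
Qed.

Lemma Jhat_vanishing_at0 : vanishing_at0 Jhat.
Proof.
  destruct Jfun_bounded as [B HB].
  exact (lcm01_vanishing_at0 _ B Jfun_nonneg HB Jfun_vanishing_at0).
Qed.

Lemma Jhat_vanishing_at1 : vanishing_at1 Jhat.
Proof.
  destruct Jfun_bounded as [B HB].
  exact (lcm01_vanishing_at1 _ B Jfun_nonneg HB Jfun_vanishing_at1).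
Qed.

Lemma Jhat_continuous : continuous_on01 Jhat.
Proof.
  apply concave_continuous_on01;
    [apply Jhat_concave | | apply Jhat_at0 | apply Jhat_at1 | apply Jhat_vanishing_at0 |
     apply Jhat_vanishing_at1].
  intros u Hu. generalize (Jfun_nonneg u) (Jhat_ge_Jfun u Hu). lra.
Qed.

Lemma Jhat_steep_at0 : (exists z, F z = 0) -> steep_at0 Jhat.
Proof.
  intros Hz M. destruct (Jfun_steep_at0 Hz M) as [h [Hh HJ]]. exists h. split; [exact Hh|].
  generalize (Jhat_ge_Jfun h ltac:(lra)). lra.
Qed.

Lemma Jhat_steep_at1 : (exists z, F z = 1) -> steep_at1 Jhat.
Proof.
  intros Hz M. destruct (Jfun_steep_at1 Hz M) as [h [Hh HJ]]. exists h. split; [exact Hh|].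
  generalize (Jhat_ge_Jfun h ltac:(lra)). lra.
Qed.

Lemma psi_star_ne1 z : F z <> 1 -> psi_star p z = right_deriv Jhat (F z).
Proof. intros Hz. exact (right_deriv01_ne1 _ _ Hz). Qed.

Lemma psi_star_at_distF0 z : F z = 0 -> psi_star p z = p_infty.
Proof.
  intros Hz. rewrite psi_star_ne1, Hz by lra.
  apply right_deriv_concave_at0; [apply Jhat_concave | apply Jhat_at0 |].
  apply Jhat_steep_at0. exists z. exact Hz.
Qed.

Lemma psi_star_at_distF1 z : F z = 1 -> psi_star p z = m_infty.
Proof.
  intros Hz. unfold psi_star. rewrite Hz.
  apply right_deriv01_concave_at1;
    [apply Jhat_concave | apply Jhat_at1 | apply Jhat_vanishing_at1 |].
  apply Jhat_steep_at1. exists z. exact Hz.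
Qed.

Lemma psi_star_interior z : 0 < F z < 1 -> exists d, psi_star p z = Finite d.
Proof.
  intros Hz. rewrite psi_star_ne1 by lra.
  destruct (right_deriv_concave _ Jhat_concave (F z) Hz) as [d [Hd _]]. exists d. exact Hd.
Qed.

Lemma psi_star_decreasing z1 z2 : z1 <= z2 -> Rbar_le (psi_star p z2) (psi_star p z1).
Proof.
  intros Hz. generalize (distF_nondecreasing z1 z2 Hz) (distF_nonneg z1) (distF_le1 z2). intros.
  destruct (Req_dec (F z2) 1) as [E2|E2]; [rewrite psi_star_at_distF1 by exact E2; exact I|].
  destruct (Req_dec (F z1) 0) as [E1|E1].
  { rewrite (psi_star_at_distF0 z1 E1). destruct (psi_star p z2); exact I. }
  rewrite !psi_star_ne1 by lra.
  destruct (right_deriv_concave _ Jhat_concave (F z1)) as [d1 [D1 _]]; [lra|].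
  destruct (right_deriv_concave _ Jhat_concave (F z2)) as [d2 [D2 _]]; [lra|].
  rewrite D1, D2.
  exact (right_deriv_concave_nonincreasing _ Jhat_concave (F z1) (F z2) d1 d2
    ltac:(lra) ltac:(lra) D1 D2).
Qed.

Lemma psi_star_right_continuous z :
  filterlim (psi_star p) (at_right z) (ext_nbhs (psi_star p z)).
Proof.
  apply (filterlim_right_continuous01_comp (right_deriv01 Jhat) F z distF_nondecreasing distF_le1
    (distF_continuous z)).
  destruct (Req_dec (F z) 1) as [E1|E1]; [rewrite E1; apply right_continuous01_at1|].
  destruct (Req_dec (F z) 0) as [E0|E0].
  - rewrite E0. apply right_deriv01_right_continuous_at0;
      [apply Jhat_concave | apply Jhat_at0 | apply Jhat_vanishing_at0 |].
    apply Jhat_steep_at0. exists z. exact E0.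
  - apply right_deriv01_right_continuous; [apply Jhat_concave|].
    generalize (distF_nonneg z) (distF_le1 z). lra.
Qed.

Lemma psi_star_finite_iff z : (exists r, psi_star p z = Finite r) <->
  (Rbar_lt (supp_inf p) z /\ Rbar_lt z (supp_sup p)).
Proof.
  split.
  - intros [r Hr]. split; apply Rbar_not_le_lt; intros Hz.
    + apply distF_eq0_iff in Hz. rewrite psi_star_at_distF0 in Hr by exact Hz. discriminate.
    + apply distF_eq1_iff in Hz. rewrite psi_star_at_distF1 in Hr by exact Hz. discriminate.
  - intros [Hinf Hsup]. apply psi_star_interior.
    assert (F z <> 0) by (intros E; apply distF_eq0_iff in E; exact (Rbar_lt_not_le _ _ Hinf E)).
    assert (F z <> 1) by (intros E; apply distF_eq1_iff in E; exact (Rbar_lt_not_le _ _ Hsup E)).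
    generalize (distF_nonneg z) (distF_le1 z). lra.
Qed.

End Density.

Theorem lemma2p1 (p0 : R -> R) :
  is_density p0 -> unif_cont p0 ->
  continuous_on01 (Jfun p0) /\
  continuous_on01 (lcm01 (Jfun p0)) /\
  (forall z : R, p0 z = Jfun p0 (distF p0 z)) /\
  (forall z1 z2 : R, z1 <= z2 -> Rbar_le (psi_star p0 z2) (psi_star p0 z1)) /\
  (forall z : R, filterlim (psi_star p0) (at_right z) (ext_nbhs (psi_star p0 z))) /\
  (forall z : R, (exists r : R, psi_star p0 z = Finite r) <->
                 (Rbar_lt (supp_inf p0) z /\ Rbar_lt z (supp_sup p0))).
Proof.
  intros [p_nonneg p_total] p_unif_cont.
  split; [apply Jfun_continuous; assumption|].
  split; [apply Jhat_continuous; assumption|].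
  split; [intros z; apply density_eq_Jfun_distF; assumption|].
  split; [intros z1 z2 Hz; apply psi_star_decreasing; assumption|].
  split; [intros z; apply psi_star_right_continuous; assumption|].
  intros z. apply psi_star_finite_iff; assumption.
Qed.
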